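(* Let $k\subseteq K$ be algebraically closed fields, $X=\mathbb{A}^s$, $B=\mathbb{A}^t$, $Y\subseteq X\times B$ a constructible subset, and $A\subseteq X(K)$. Suppose there exist $\alpha,\beta\in A$ with the following property: for every $m\in\mathbb{N}$ and $i\le m$, letting $p^{(m)}_i\in X^m(K)$ be the $m$-tuple $(\alpha,\dots,\alpha,\beta,\alpha,\dots,\alpha)$ with $\beta$ in the $i$th place, and $P^{(m)}_i$ the $k$-Zariski closure of $\{p^{(m)}_i\}$, we have $p^{(m)}_i\notin P^{(m)}_j$ for all $i\neq j$. Then there are a natural number $n$ and a $k$-constructible set $Z\subseteq X\times X^n$ such that for every $b\in B(K)$ there is $a\in A^n$ with $Y_b(K)\cap A=Z_a(K)\cap A$.
   Context: For a set $Y\subseteq X\times B$ and $b\in B$, $Y_b=\{x\in X:(x,b)\in Y\}$ denotes the fibre; similarly $Z_a=\{x\in X:(x,a)\in Z\}$ for $a\in X^n$. The $k$-Zariski closure of a point is the smallest Zariski-closed set defined over $k$ containing it. *)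

From mathcomp Require Import all_boot all_algebra.
From mathcomp Require Import mpoly.
Set Implicit Arguments. Unset Strict Implicit. Unset Printing Implicit Defensive.
Import GRing.Theory.
Local Open Scope ring_scope.

(* Points of affine N-space A^N(K) are row vectors 'rV[K]_N; subsets of
   A^N(K) are predicates 'rV[K]_N -> Prop.  The subfield k of K is given by
   a (necessarily injective) field morphism f : k -> K. *)

(* Syntax of constructible sets: finite boolean combinations of zero sets
   of polynomials with coefficients in R. *)
Inductive cform (R : nzRingType) (N : nat) : Type :=
  | CTrue
  | CZero of {mpoly R[N]}
  | CNot of cform R N
  | CAnd of cform R N & cform R N
  | COr of cform R N & cform R N.

Definition coords (K : nzRingType) (N : nat) (x : 'rV[K]_N) : 'I_N -> K :=
  fun i => x 0 i.

Fixpoint cform_sat (R K : comNzRingType) (f : R -> K) (N : nat)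
    (phi : cform R N) (x : 'rV[K]_N) : Prop :=
  match phi with
  | CTrue => True
  | CZero p => (map_mpoly f p).@[coords x] = 0
  | CNot psi => ~ cform_sat f psi x
  | CAnd a b => cform_sat f a x /\ cform_sat f b x
  | COr a b => cform_sat f a x \/ cform_sat f b x
  end.

Definition constructible_over (R K : comNzRingType) (f : R -> K) (N : nat)
    (S : 'rV[K]_N -> Prop) : Prop :=
  exists phi : cform R N, forall x, S x <-> cform_sat f phi x.

Definition constructible (K : comNzRingType) (N : nat) (S : 'rV[K]_N -> Prop) :=
  constructible_over (@id K) S.

Definition kclosed (k K : comNzRingType) (f : k -> K) (N : nat)
    (S : 'rV[K]_N -> Prop) : Prop :=
  exists ps : seq {mpoly k[N]},
    forall x, S x <-> (forall p, p \in ps -> (map_mpoly f p).@[coords x] = 0).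

Definition kzar_closure (k K : comNzRingType) (f : k -> K) (N : nat)
    (p : 'rV[K]_N) : 'rV[K]_N -> Prop :=
  fun x => forall S, kclosed f S -> S p -> S x.

(* An m-tuple of points of A^s, viewed as a point of A^(m*s) = (A^s)^m. *)
Definition tuple_pt (K : nzRingType) (s m : nat) (a : 'I_m -> 'rV[K]_s)
    : 'rV[K]_(m * s) :=
  mxvec (\matrix_(i < m) a i).

Definition p_tuple (K : nzRingType) (s m : nat) (alpha beta : 'rV[K]_s)
    (i : 'I_m) : 'I_m -> 'rV[K]_s :=
  fun j => if j == i then beta else alpha.

From mathcomp Require Import all_boot all_algebra.
From mathcomp Require Import mpoly.
From Stdlib Require Import Classical.

(* Split each polynomial q(x, b) of a defining formula of Y as the dot product
   v(x) . c(b) of the vector v(x) of its x-monomials (which have coefficient 1,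
   so are defined over k) with a vector c(b) of coefficients.  For fixed b, the
   x in A with q(x, b) = 0 are exactly the x in A for which v(x) lies in the
   span of v(a_1), ..., v(a_W), where the a_j are solutions in A whose images
   span that of the whole solution set.  Membership in a span is a rank
   condition, i.e. a condition on minors, hence k-constructible in x and the
   a_j.  If there is no solution in A, the parameters have to force "false":
   two further parameters, equal to (beta, alpha) or to (alpha, beta), are
   tested against a k-closed set containing the first pair but not the second;
   it exists by the hypothesis for m = 2.  Boolean combinations concatenate
   the parameter lists. *)

Set Implicit Arguments. Unset Strict Implicit. Unset Printing Implicit Defensive.
Import GRing.Theory.
Local Open Scope ring_scope.

Section PolynomialMaps.
Variables (k K : comNzRingType) (f : {rmorphism k -> K}).

Definition kpoly_fun N (g : 'rV[K]_N -> K) :=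
  exists q : {mpoly k[N]}, forall x, g x = (map_mpoly f q).@[coords x].

Definition kpoly_mx N m n (F : 'rV[K]_N -> 'M[K]_(m, n)) :=
  forall i j, kpoly_fun (fun z => F z i j).

Lemma kpoly_fun_ext N (g h : 'rV[K]_N -> K) :
  kpoly_fun g -> g =1 h -> kpoly_fun h.
Proof. by move=> [q Hq] gh; exists q => x; rewrite -gh. Qed.

Lemma kpoly_fun_cst N c : kpoly_fun (fun _ : 'rV[K]_N => f c).
Proof. by exists c%:MP => x; rewrite map_mpolyC mevalC. Qed.

Lemma kpoly_fun_coord N i : kpoly_fun (fun x : 'rV[K]_N => x 0 i).
Proof. by exists 'X_i => x; rewrite map_mpolyX mevalXU. Qed.

Lemma kpoly_funD N (g h : 'rV[K]_N -> K) :
  kpoly_fun g -> kpoly_fun h -> kpoly_fun (fun x => g x + h x).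
Proof. by move=> [p Hp] [q Hq]; exists (p + q) => x; rewrite !rmorphD Hp Hq. Qed.

Lemma kpoly_funM N (g h : 'rV[K]_N -> K) :
  kpoly_fun g -> kpoly_fun h -> kpoly_fun (fun x => g x * h x).
Proof. by move=> [p Hp] [q Hq]; exists (p * q) => x; rewrite !rmorphM Hp Hq. Qed.

Lemma kpoly_funXn N (g : 'rV[K]_N -> K) e :
  kpoly_fun g -> kpoly_fun (fun x => g x ^+ e).
Proof. by move=> [p Hp]; exists (p ^+ e) => x; rewrite !rmorphXn Hp. Qed.

Lemma kpoly_fun_sum N (I : Type) (r : seq I) (P : pred I) (F : I -> 'rV[K]_N -> K) :
  (forall i, kpoly_fun (F i)) -> kpoly_fun (fun x => \sum_(i <- r | P i) F i x).
Proof.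
move=> kF; elim: r => [|i r IHr].
  by apply: (kpoly_fun_ext (kpoly_fun_cst N 0)) => x; rewrite rmorph0 big_nil.
case Pi: (P i).
  by apply: (kpoly_fun_ext (kpoly_funD (kF i) IHr)) => x; rewrite big_cons Pi.
by apply: (kpoly_fun_ext IHr) => x; rewrite big_cons Pi.
Qed.

Lemma kpoly_fun_prod N (I : Type) (r : seq I) (P : pred I) (F : I -> 'rV[K]_N -> K) :
  (forall i, kpoly_fun (F i)) -> kpoly_fun (fun x => \prod_(i <- r | P i) F i x).
Proof.
move=> kF; elim: r => [|i r IHr].
  by apply: (kpoly_fun_ext (kpoly_fun_cst N 1)) => x; rewrite rmorph1 big_nil.
case Pi: (P i).
  by apply: (kpoly_fun_ext (kpoly_funM (kF i) IHr)) => x; rewrite big_cons Pi.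
by apply: (kpoly_fun_ext IHr) => x; rewrite big_cons Pi.
Qed.

Lemma kpoly_fun_meval N M (p : {mpoly k[M]}) (h : 'I_M -> 'rV[K]_N -> K) :
  (forall i, kpoly_fun (h i)) -> kpoly_fun (fun x => (map_mpoly f p).@[h^~ x]).
Proof.
move=> kh; apply: kpoly_fun_ext (fun x => esym (mevalE _ _)).
apply: kpoly_fun_sum => m; apply: kpoly_funM.
  by rewrite mcoeff_map_mpoly; apply: kpoly_fun_cst.
by apply: kpoly_fun_prod => i; apply: kpoly_funXn.
Qed.

Lemma kpoly_fun_det N n (F : 'rV[K]_N -> 'M[K]_n) :
  kpoly_mx F -> kpoly_fun (fun x => \det (F x)).
Proof.
move=> kF; apply: kpoly_fun_sum => sigma; apply: kpoly_funM.
  by rewrite -(rmorph_sign f); apply: kpoly_fun_cst.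
by apply: kpoly_fun_prod.
Qed.

Lemma kpoly_mx_coords N m n (G : 'rV[K]_N -> 'M[K]_(m, n)) :
  (forall i j, exists l, forall z, G z i j = z 0 l) -> kpoly_mx G.
Proof.
move=> Gz i j; have [l E] := Gz i j.
by apply: kpoly_fun_ext (kpoly_fun_coord l) _ => z; rewrite E.
Qed.

Lemma kpoly_mx_reindex N m n m' n' (F : 'rV[K]_N -> 'M[K]_(m, n))
    (G : 'rV[K]_N -> 'M[K]_(m', n')) :
  kpoly_mx F -> (forall i j, exists i' j', forall z, G z i j = F z i' j') ->
  kpoly_mx G.
Proof.
by move=> kF GF i j; have [i' [j' E]] := GF i j; apply: kpoly_fun_ext (kF i' j') _.
Qed.

Lemma kpoly_mx_usubmx N m1 m2 n (F : 'rV[K]_N -> 'M[K]_(m1 + m2, n)) :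
  kpoly_mx F -> kpoly_mx (fun z => usubmx (F z)).
Proof.
by move=> kF; apply: kpoly_mx_reindex kF _ => i j; exists (lshift _ i), j => z; rewrite mxE.
Qed.

Lemma kpoly_mx_dsubmx N m1 m2 n (F : 'rV[K]_N -> 'M[K]_(m1 + m2, n)) :
  kpoly_mx F -> kpoly_mx (fun z => dsubmx (F z)).
Proof.
by move=> kF; apply: kpoly_mx_reindex kF _ => i j; exists (rshift _ i), j => z; rewrite mxE.
Qed.

Lemma kpoly_mx_col_mx N m1 m2 n (F1 : 'rV[K]_N -> 'M[K]_(m1, n))
    (F2 : 'rV[K]_N -> 'M[K]_(m2, n)) :
  kpoly_mx F1 -> kpoly_mx F2 -> kpoly_mx (fun z => col_mx (F1 z) (F2 z)).
Proof.
move=> kF1 kF2 i j; rewrite -(splitK i); case: (split i) => i' /=.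
  by apply: kpoly_fun_ext (kF1 i' j) _ => z; rewrite col_mxEu.
by apply: kpoly_fun_ext (kF2 i' j) _ => z; rewrite col_mxEd.
Qed.

End PolynomialMaps.

Section Constructible.
Variables (k K : comNzRingType) (f : {rmorphism k -> K}).

Lemma constructible_over_ext N (P Q : 'rV[K]_N -> Prop) :
  constructible_over f P -> (forall x, P x <-> Q x) -> constructible_over f Q.
Proof. by move=> [phi HP] PQ; exists phi => x; rewrite -PQ. Qed.

Lemma constructible_over_true N : constructible_over f (fun _ : 'rV[K]_N => True).
Proof. by exists (CTrue _ _). Qed.

Lemma constructible_over_eq0 N (g : 'rV[K]_N -> K) :
  kpoly_fun f g -> constructible_over f (fun x => g x = 0).
Proof. by move=> [q Hq]; exists (CZero q) => x /=; rewrite Hq. Qed.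

Lemma constructible_over_not N (P : 'rV[K]_N -> Prop) :
  constructible_over f P -> constructible_over f (fun x => ~ P x).
Proof. by move=> [phi HP]; exists (CNot phi) => x /=; rewrite HP. Qed.

Lemma constructible_over_neq0 N (g : 'rV[K]_N -> K) :
  kpoly_fun f g -> constructible_over f (fun x => g x != 0).
Proof.
move=> /constructible_over_eq0/constructible_over_not cg.
by apply: constructible_over_ext cg _ => x; split=> /eqP.
Qed.

Lemma constructible_over_and N (P Q : 'rV[K]_N -> Prop) :
  constructible_over f P -> constructible_over f Q ->
  constructible_over f (fun x => P x /\ Q x).
Proof. by move=> [phi HP] [psi HQ]; exists (CAnd phi psi) => x /=; rewrite HP HQ. Qed.

Lemma constructible_over_or N (P Q : 'rV[K]_N -> Prop) :
  constructible_over f P -> constructible_over f Q ->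
  constructible_over f (fun x => P x \/ Q x).
Proof. by move=> [phi HP] [psi HQ]; exists (COr phi psi) => x /=; rewrite HP HQ. Qed.

Lemma constructible_over_imply N (P Q : 'rV[K]_N -> Prop) :
  constructible_over f P -> constructible_over f Q ->
  constructible_over f (fun x => P x -> Q x).
Proof.
move=> cP cQ.
apply: constructible_over_ext (constructible_over_or (constructible_over_not cP) cQ) _ => x.
by split=> [[nP|] // /nP|]; have [|] := classic (P x); auto.
Qed.

Lemma constructible_over_bool N (b : bool) : constructible_over f (fun _ : 'rV[K]_N => b).
Proof.
case: b; first exact: constructible_over_ext (constructible_over_true N) _.
by apply: constructible_over_ext (constructible_over_not (constructible_over_true N)) _.
Qed.

Lemma constructible_over_forall_seq N (T : eqType) (r : seq T)
    (P : T -> 'rV[K]_N -> Prop) :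
  (forall t, constructible_over f (P t)) ->
  constructible_over f (fun x => forall t, t \in r -> P t x).
Proof.
move=> cP; elim: r => [|t r IHr].
  exact: constructible_over_ext (constructible_over_true N) _.
apply: constructible_over_ext (constructible_over_and (cP t) IHr) _ => x.
split=> [[Pt Pr] u|Pall]; first by rewrite inE => /predU1P[->|/Pr].
by split=> [|u ur]; apply: Pall; rewrite inE ?eqxx ?ur ?orbT.
Qed.

Lemma constructible_over_forall N (T : finType) (P : T -> 'rV[K]_N -> Prop) :
  (forall t, constructible_over f (P t)) ->
  constructible_over f (fun x => forall t, P t x).
Proof.
move=> /(constructible_over_forall_seq (enum T)) cP.
by apply: constructible_over_ext cP _ => x; split=> Px t; [apply: Px; rewrite mem_enum|].
Qed.

Lemma constructible_over_exists N (T : finType) (P : T -> 'rV[K]_N -> Prop) :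
  (forall t, constructible_over f (P t)) ->
  constructible_over f (fun x => exists t, P t x).
Proof.
move=> cP; have cnP t := constructible_over_not (cP t).
apply: constructible_over_ext (constructible_over_not (constructible_over_forall cnP)) _ => x.
split; last by move=> [t Pt] /(_ t).
by move=> /not_all_ex_not[t /NNPP]; exists t.
Qed.

Lemma kclosed_constructible N (S : 'rV[K]_N -> Prop) :
  kclosed f S -> constructible_over f S.
Proof.
move=> [ps Sps]; apply: constructible_over_ext _ (fun x => iff_sym (Sps x)).
apply: constructible_over_forall_seq => p.
by apply: constructible_over_eq0; exists p.
Qed.

Lemma constructible_over_comp N M (P : 'rV[K]_M -> Prop) (G : 'rV[K]_N -> 'rV[K]_M) :
  constructible_over f P -> kpoly_mx f G -> constructible_over f (fun z => P (G z)).
Proof.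
move=> [phi HP] kG; apply: constructible_over_ext _ (fun z => iff_sym (HP (G z))).
elim: phi {HP} => [|q|phi IH|phi IH psi IH'|phi IH psi IH'] /=.
- exact: constructible_over_true.
- by apply: constructible_over_eq0; apply: kpoly_fun_meval => i; apply: kG.
- exact: constructible_over_not.
- exact: constructible_over_and.
- exact: constructible_over_or.
Qed.

Lemma not_kzar_closure N (p q : 'rV[K]_N) :
  ~ kzar_closure f p q -> exists S, [/\ kclosed f S, S p & ~ S q].
Proof.
move=> npq; apply: NNPP => noS; apply: npq => S cS Sp.
by apply: NNPP => Sq; apply: noS; exists S.
Qed.

End Constructible.

Section Minors.
Variable F : fieldType.

Definition nz_minor r m n (B : 'M[F]_(m, n)) :=
  exists (g : {ffun 'I_r -> 'I_m}) (h : {ffun 'I_r -> 'I_n}), \det (mxsub g h B) != 0.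

Lemma nz_minor_rank_le r m n (B : 'M[F]_(m, n)) : nz_minor r B -> (r <= \rank B)%N.
Proof.
move=> [g [h nz]]; have : mxsub g h B \in unitmx by rewrite unitmxE unitfE.
move=> /mxrank_unit <-; rewrite mxsubrc (leq_trans (mxrankS (rowsub_sub _ _))) //.
by rewrite -mxrank_tr -[leqRHS]mxrank_tr trmx_mxsub mxrankS ?rowsub_sub.
Qed.

Lemma nz_minor_rank m n (B : 'M[F]_(m, n)) : nz_minor (\rank B) B.
Proof.
have full : row_full (rowsub (maxrankfun B) B)^T.
  by rewrite /row_full mxrank_tr; have := maxrowsub_free B.
exists (maxrankfun B), (fullrankfun full).
have -> : mxsub (maxrankfun B) (fullrankfun full) B
        = (rowsub (fullrankfun full) (rowsub (maxrankfun B) B)^T)^T.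
  by apply/matrixP => i j; rewrite !mxE.
by rewrite det_tr -unitfE -unitmxE fullrowsub_unit.
Qed.

Definition rank_ge r m n (B : 'M[F]_(m, n)) :=
  exists2 r' : 'I_m.+1, (r <= r')%N & nz_minor r' B.

Lemma rank_geP r m n (B : 'M[F]_(m, n)) : rank_ge r B <-> (r <= \rank B)%N.
Proof.
split=> [[r' le_rr' /nz_minor_rank_le]|le_rB]; first exact: leq_trans.
have lt_Bm : (\rank B < m.+1)%N by rewrite ltnS rank_leq_row.
by exists (Ordinal lt_Bm) => //; apply: nz_minor_rank.
Qed.

Definition minor_submx m n (u : 'rV[F]_n) (W : 'M[F]_(m, n)) :=
  forall r : 'I_m.+2, rank_ge r (col_mx W u) -> rank_ge r W.

Lemma minor_submxP m n (u : 'rV[F]_n) (W : 'M[F]_(m, n)) :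
  minor_submx u W <-> (u <= W)%MS.
Proof.
have rk_col : \rank (col_mx W u) = \rank (W + u)%MS by rewrite addsmxE.
split=> [uW|/addsmx_idPl uW r]; last by rewrite !rank_geP rk_col uW.
have lt_col : (\rank (col_mx W u) < m.+2)%N.
  by rewrite ltnS (leq_trans (rank_leq_row _)) ?addn1.
have /rank_geP := uW (Ordinal lt_col) (proj2 (rank_geP _ _) (leqnn _)).
rewrite /= rk_col => le_WuW.
have : (W + u <= W)%MS.
  by rewrite -(mxrank_leqif_sup (addsmxSl W u)).2 eqn_leq le_WuW mxrankS ?addsmxSl.
by rewrite addsmx_sub => /andP[].
Qed.

End Minors.

Section ConstructibleMinors.
Variables (k : comNzRingType) (K : fieldType) (f : {rmorphism k -> K}).

Lemma rank_ge_constructible N r m n (B : 'rV[K]_N -> 'M[K]_(m, n)) :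
  kpoly_mx f B -> constructible_over f (fun z => rank_ge r (B z)).
Proof.
move=> kB.
have crB (r' : 'I_m.+1) :
    constructible_over f (fun z => (r <= r')%N /\ nz_minor r' (B z)).
  apply: constructible_over_and; first exact: constructible_over_bool.
  apply: constructible_over_exists => g; apply: constructible_over_exists => h.
  apply/constructible_over_neq0/kpoly_fun_det/(kpoly_mx_reindex kB) => i j.
  by exists (g i), (h j) => z; rewrite mxE.
apply: constructible_over_ext (constructible_over_exists crB) _ => z.
by split=> -[r'] => [[]|]; exists r'.
Qed.

Lemma minor_submx_constructible N m n (u : 'rV[K]_N -> 'rV[K]_n)
    (W : 'rV[K]_N -> 'M[K]_(m, n)) :
  kpoly_mx f u -> kpoly_mx f W ->
  constructible_over f (fun z => minor_submx (u z) (W z)).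
Proof.
move=> ku kW; apply: constructible_over_forall => r.
by apply: constructible_over_imply; apply: rank_ge_constructible => //; apply: kpoly_mx_col_mx.
Qed.

End ConstructibleMinors.

Section SpanningFamily.
Variables (F : fieldType) (T : Type) (P : T -> Prop) (n : nat) (v : T -> 'rV[F]_n).

Definition span_mx (fam : 'I_n -> T) : 'M[F]_n := \matrix_j v (fam j).

Lemma span_mx_extend fam y :
  (forall j, P (fam j)) -> P y -> ~~ (v y <= span_mx fam)%MS ->
  exists2 fam', (forall j, P (fam' j)) & (\rank (span_mx fam) < \rank (span_mx fam'))%N.
Proof.
(* Some row of the square matrix span_mx fam is redundant, since v y is not in
   its span; replacing that row by v y strictly enlarges the span. *)
move=> Pfam Py yNspan.
have /row_freePn[i iW] : ~~ row_free (span_mx fam).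
  by apply: contra yNspan; rewrite row_free_unit -row_full_unit => /submx_full->.
pose fam' j := if j == i then y else fam j.
exists fam' => [j|]; first by rewrite /fam'; case: eqP.
have sub_fam' : (span_mx fam <= span_mx fam')%MS.
  apply/row_subP => j; rewrite rowK; have [->|ji] := eqVneq j i.
    move: iW; rewrite rowK => /submx_trans; apply; apply/row_subP => l.
    rewrite row'Esub row_rowsub rowK; apply: (eq_row_sub (lift i l)).
    by rewrite rowK /fam' eq_sym (negPf (neq_lift _ _)).
  by apply: (eq_row_sub j); rewrite rowK /fam' (negPf ji).
have : (span_mx fam < span_mx fam')%MS.
  rewrite ltmxE sub_fam'; apply: contra yNspan => /(submx_trans _); apply.
  by apply: (eq_row_sub i); rewrite rowK /fam' eqxx.
by rewrite ltmxErank => /andP[].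
Qed.

Lemma spanning_family y0 : P y0 ->
  exists fam, (forall j, P (fam j)) /\ forall y, P y -> (v y <= span_mx fam)%MS.
Proof.
move=> Py0; apply: NNPP => noSpan.
have grow d : exists2 fam, (forall j, P (fam j)) & (d <= \rank (span_mx fam))%N.
  elim: d => [|d [fam Pfam le_d]]; first by exists (fun _ => y0).
  have [y Py yNspan] : exists2 y, P y & ~~ (v y <= span_mx fam)%MS.
    apply: NNPP => spans; apply: noSpan; exists fam; split=> // y Py.
    by apply/negPn/negP => yNspan; apply: spans; exists y.
  have [fam' Pfam' lt_rank] := span_mx_extend Pfam Py yNspan.
  by exists fam' => //; apply: leq_ltn_trans lt_rank.
have [fam _] := grow n.+1.
by rewrite ltnNge rank_leq_col.
Qed.

End SpanningFamily.

Lemma map_mpoly_id (R : nzRingType) n (p : {mpoly R[n]}) : map_mpoly id p = p.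
Proof.
by apply/mpolyP => m; rewrite -[map_mpoly id p]/(map_mpoly idfun p) mcoeff_map_mpoly.
Qed.

Lemma rows_col_mx (R : Type) m1 m2 n (Q : 'rV[R]_n -> Prop) (P1 : 'M[R]_(m1, n))
    (P2 : 'M[R]_(m2, n)) :
  (forall i, Q (row i P1)) -> (forall i, Q (row i P2)) ->
  forall i, Q (row i (col_mx P1 P2)).
Proof.
by move=> Q1 Q2 i; rewrite -(splitK i); case: (split i) => i' /=; rewrite ?rowKu ?rowKd.
Qed.

Section MonomialSplitting.
Variables (R : comNzRingType) (s t : nat) (p : {mpoly R[s + t]}).
Local Notation mono j := (nth 0%MM (msupp p) j).

Definition lmonomials (x : 'rV[R]_s) : 'rV[R]_(size (msupp p)) :=
  \row_j \prod_(i < s) x 0 i ^+ mono j (lshift t i).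

Definition rcoefs (b : 'rV[R]_t) : 'rV[R]_(size (msupp p)) :=
  \row_j (p@_(mono j) * \prod_(i < t) b 0 i ^+ mono j (rshift s i)).

Lemma meval_row_mx x b :
  p.@[coords (row_mx x b)] = (lmonomials x *m (rcoefs b)^T) 0 0.
Proof.
rewrite mevalE (big_nth 0%MM) big_mkord mxE; apply: eq_bigr => j _.
rewrite !mxE big_split_ord /= /coords.
under eq_bigr do rewrite row_mxEl.
under [X in _ * (_ * X)]eq_bigr do rewrite row_mxEr.
by rewrite mulrCA.
Qed.

End MonomialSplitting.

Section UniformParameters.
Variables (k : comNzRingType) (K : fieldType) (f : {rmorphism k -> K}) (s t : nat).
Variable sep : 'M[K]_(2, s) -> Prop.

Fixpoint nparams (phi : cform K (s + t)) : nat :=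
  match phi with
  | CTrue => 0
  | CZero p => 2 + size (msupp p)
  | CNot phi => nparams phi
  | CAnd phi psi | COr phi psi => nparams phi + nparams psi
  end.

(* [phi] would otherwise be implicit, being determined by the type of [P]. *)
Local Unset Implicit Arguments.
Fixpoint param_sat (phi : cform K (s + t)) (x : 'rV[K]_s) :
    'M[K]_(nparams phi, s) -> Prop :=
  match phi return 'M[K]_(nparams phi, s) -> Prop with
  | CTrue => fun _ => True
  | CZero p => fun P =>
      sep (usubmx P) /\
      minor_submx (lmonomials p x) (span_mx (lmonomials p) (fun j => row j (dsubmx P)))
  | CNot phi => fun P => ~ param_sat phi x P
  | CAnd phi psi => fun P => param_sat phi x (usubmx P) /\ param_sat psi x (dsubmx P)
  | COr phi psi => fun P => param_sat phi x (usubmx P) \/ param_sat psi x (dsubmx P)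
  end.
Local Set Implicit Arguments.

Lemma kpoly_mx_lmonomials N (p : {mpoly K[s + t]}) (X : 'rV[K]_N -> 'rV[K]_s) :
  kpoly_mx f X -> kpoly_mx f (fun z => lmonomials p (X z)).
Proof.
move=> kX i j; apply: kpoly_fun_ext (fun z => esym (mxE _ _ _ _)).
by apply: kpoly_fun_prod => l; apply: kpoly_funXn.
Qed.

Hypothesis sep_constructible :
  constructible_over f (fun z : 'rV[K]_(2 * s) => sep (vec_mx z)).

Lemma param_sat_constructible phi N (X : 'rV[K]_N -> 'rV[K]_s)
    (P : 'rV[K]_N -> 'M[K]_(nparams phi, s)) :
  kpoly_mx f X -> kpoly_mx f P ->
  constructible_over f (fun z => param_sat phi (X z) (P z)).
Proof.
move=> kX; elim: phi P => [|p|phi IH|phi IH psi IH'|phi IH psi IH'] P kP /=.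
- exact: constructible_over_true.
- apply: constructible_over_and.
    have kG : kpoly_mx f (fun z => mxvec (usubmx (P z))).
      apply: kpoly_mx_reindex (kpoly_mx_usubmx kP) _ => i l.
      by rewrite (ord1 i); case/mxvec_indexP: l => a c; exists a, c => z; rewrite mxvecE.
    apply: constructible_over_ext (constructible_over_comp sep_constructible kG) _ => z.
    by rewrite mxvecK.
  apply: minor_submx_constructible; first exact: kpoly_mx_lmonomials.
  move=> i j; apply: kpoly_fun_ext (fun z => esym (mxE _ _ _ _)).
  apply: kpoly_mx_lmonomials; apply: kpoly_mx_reindex (kpoly_mx_dsubmx kP) _ => i' l.
  by exists i, l => z; rewrite mxE.
- exact/constructible_over_not/IH.
- by apply: constructible_over_and;
    [apply/IH/kpoly_mx_usubmx | apply/IH'/kpoly_mx_dsubmx].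
- by apply: constructible_over_or;
    [apply/IH/kpoly_mx_usubmx | apply/IH'/kpoly_mx_dsubmx].
Qed.

Variables (A : 'rV[K]_s -> Prop) (F_on F_off : 'M[K]_(2, s)).
Hypotheses (A_on : forall i, A (row i F_on)) (A_off : forall i, A (row i F_off)).
Hypotheses (sep_on : sep F_on) (sep_off : ~ sep F_off).
Variable b : 'rV[K]_t.

Lemma eq0_params p : exists P : 'M[K]_(nparams (CZero p), s),
  (forall i, A (row i P)) /\
  forall x, A x -> (p.@[coords (row_mx x b)] = 0 <-> param_sat (CZero p) x P).
Proof.
pose v := lmonomials p; pose c := (rcoefs p b)^T.
have eval0 x : p.@[coords (row_mx x b)] = 0 <-> (v x <= kermx c)%MS.
  rewrite meval_row_mx; split=> [vxc0|/sub_kermxP->]; last by rewrite mxE.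
  by apply/sub_kermxP; rewrite [LHS]mx11_scalar vxc0 raddf0.
have [[y0 Ty0]|noZero] := classic (exists y, A y /\ (v y <= kermx c)%MS); last first.
  exists (col_mx F_off (\matrix_(j < size (msupp p)) row 0 F_off)); split.
    by apply: rows_col_mx => // j; rewrite rowK.
  move=> x Ax /=; rewrite col_mxKu; split=> [/eval0 vx0|[]//].
  by case: noZero; exists x.
have [fam [Tfam span_ker]] :=
  spanning_family (P := fun y => A y /\ (v y <= kermx c)%MS) v Ty0.
exists (col_mx F_on (\matrix_j fam j)); split.
  by apply: rows_col_mx => // j; rewrite rowK; case: (Tfam j).
move=> x Ax /=; rewrite col_mxKu col_mxKd minor_submxP eval0.
have -> : span_mx v (fun j => row j (\matrix_j fam j)) = span_mx v fam.
  by apply/matrixP => i j; rewrite !mxE rowK.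
split=> [vx0|]; first by split=> //; apply: span_ker.
move=> [_ /submx_trans]; apply; apply/row_subP => j.
by rewrite rowK; case: (Tfam j).
Qed.

Lemma exists_params phi : exists P : 'M[K]_(nparams phi, s),
  (forall i, A (row i P)) /\
  forall x, A x -> (cform_sat id phi (row_mx x b) <-> param_sat phi x P).
Proof.
elim: phi => [|p|phi [P [AP satP]]|phi [P [AP satP]] psi [Q [AQ satQ]]|
                   phi [P [AP satP]] psi [Q [AQ satQ]]] /=.
- by exists 0; split=> [[]|].
- have [P [AP satP]] := eq0_params p.
  by exists P; split=> // x Ax; rewrite map_mpoly_id; apply: satP.
- by exists P; split=> // x Ax; rewrite satP.
- exists (col_mx P Q); split; first exact: rows_col_mx.
  by move=> x Ax; rewrite col_mxKu col_mxKd satP // satQ.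
- exists (col_mx P Q); split; first exact: rows_col_mx.
  by move=> x Ax; rewrite col_mxKu col_mxKd satP // satQ.
Qed.

End UniformParameters.
Arguments param_sat {K s t}.

Theorem lemma6p2 (k K : closedFieldType) (f : {rmorphism k -> K})
    (s t : nat) (Y : 'rV[K]_(s + t) -> Prop) (A : 'rV[K]_s -> Prop) :
  constructible Y ->
  (exists alpha beta : 'rV[K]_s,
     A alpha /\ A beta /\
     forall (m : nat) (i j : 'I_m), i != j ->
       ~ kzar_closure f (tuple_pt (p_tuple alpha beta j))
                        (tuple_pt (p_tuple alpha beta i))) ->
  exists (n : nat) (Z : 'rV[K]_(s + n * s) -> Prop),
    constructible_over f Z /\
    forall b : 'rV[K]_t,
      exists a : 'I_n -> 'rV[K]_s,
        (forall l, A (a l)) /\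
        forall x : 'rV[K]_s, A x ->
          (Y (row_mx x b) <-> Z (row_mx x (tuple_pt a))).
Proof.
move=> [phi Yphi] [alpha [beta [Aalpha [Abeta separated]]]].
have [S [S_closed S_on S_off]] := not_kzar_closure (separated 2 ord_max ord0 isT).
pose flag (i : 'I_2) := \matrix_j p_tuple alpha beta i j.
have A_flag i j : A (row j (flag i)) by rewrite rowK /p_tuple; case: eqP.
pose sep F := S (mxvec F).
have sep_constructible : constructible_over f (fun z => sep (vec_mx z)).
  apply: constructible_over_ext (kclosed_constructible S_closed) _ => z.
  by rewrite /sep vec_mxK.
exists (nparams phi), (fun z => param_sat sep phi (lsubmx z) (vec_mx (rsubmx z))); split.
  apply: (param_sat_constructible sep_constructible); apply: kpoly_mx_coords => i j.
    by exists (lshift _ j) => z; rewrite mxE (ord1 i).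
  by exists (rshift _ (mxvec_index i j)) => z; rewrite !mxE.
move=> b; have [P [AP satP]] :=
  exists_params (sep := sep) (A := A) (A_flag ord0) (A_flag ord_max) S_on S_off b phi.
exists (fun l => row l P); split=> // x Ax.
rewrite Yphi satP // row_mxKl row_mxKr /tuple_pt mxvecK.
suff -> : \matrix_l row l P = P by [].
by apply/matrixP => i j; rewrite !mxE.
Qed.
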